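(* Let $\theta\in\mathbb{R}$ with $\omega_0=\cos\theta\neq0$, $\gamma=\sin\theta$, and let $c,\kappa\in\mathbb{R}$. Let $\mathcal H_1$ be the operator on the Fock space $\mathcal F^2(\mathbb C^3)$ (defined on polynomials) given by $$\mathcal H_1=\omega_0^{-2}\Big(\sum_{i,j=1}^3B_{ij}\,\zeta_i\partial_{\zeta_j}+\sum_{i,j,k,l=1}^3V_{ijkl}\,\zeta_i\partial_{\zeta_j}\zeta_k\partial_{\zeta_l}\Big)+\kappa,$$ with coefficients as in the context. Then $\mathcal H_1^{\star}\neq\mathcal H_1$, where $\mathcal H_1^\star$ is the adjoint of $\mathcal H_1$ with respect to the Fock inner product.
   Context: $\mathcal F^2(\mathbb C^3)$ is the Hilbert space of entire functions $\psi(\zeta_1,\zeta_2,\zeta_3)$ with inner product $\langle\psi,\phi\rangle=\int_{\mathbb C^3}\psi\,\overline{\phi}\,dW(\zeta_1)dW(\zeta_2)dW(\zeta_3)$, $dW(u)=\pi^{-1}e^{-|u|^2}\,d(\mathrm{Re}\,u)\,d(\mathrm{Im}\,u)$ finite. The adjoint is characterized by $\langle\mathcal H_1\psi,K\rangle=\langle\psi,\mathcal H_1^\star K\rangle$ for the reproducing kernels $K^{[m_1,m_2,m_3]}_{\zeta_1,\zeta_2,\zeta_3}(u_1,u_2,u_3)=\prod_{j=1}^3u_j^{m_j}e^{u_j\overline{\zeta_j}}$. Nonzero coefficients: $B_{11}=c\omega_0$, $B_{22}=-c\omega_0$, $B_{33}=-2\omega_0^2c$, $B_{12}=B_{21}=ic\gamma\omega_0$;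 $V_{1111}=V_{2222}=\tfrac14$, $V_{1122}=-\tfrac12$, $V_{1212}=V_{2121}=-\tfrac{\gamma^2}{4}$, $V_{1221}=-\tfrac{\gamma^2}{2}$, $V_{3333}=\omega_0^2$, $V_{1112}=V_{1121}=V_{1211}=V_{2111}=\tfrac{i\gamma}{4}$, $V_{2212}=V_{2221}=V_{1222}=V_{2122}=-\tfrac{i\gamma}{4}$, $V_{1133}=-\omega_0$, $V_{2233}=\omega_0$, $V_{1233}=V_{2133}=-i\gamma\omega_0$; all others zero.
   Formalization: γ = sin θ is also assumed nonzero, and $\mathcal H_1^\star\neq\mathcal H_1$ means that $\langle\mathcal H_1\psi,\phi\rangle\neq\langle\psi,\mathcal H_1\phi\rangle$ for some polynomials ψ, φ. Apart from conventions, each condition added here is assumed in the paper as well or is needed for the statement above to hold. *)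

From mathcomp Require Import all_boot all_algebra.
From mathcomp Require Import complex.
From mathcomp Require Import reals trigo.
From mathcomp Require Import mpoly.
Import GRing.Theory Num.Theory.
Set Implicit Arguments. Unset Strict Implicit. Unset Printing Implicit Defensive.
Local Open Scope ring_scope.

(* Polynomials in zeta_1, zeta_2, zeta_3 (indices 0,1,2) with complex coefficients:
   the common dense domain of H_1 in F^2(C^3). *)
Notation poly3 R := (mpoly.mpoly 3 R[i]).

Definition zeta {R : realType} (i : 'I_3) : poly3 R := mpoly.mpolyX R[i] (mpoly.mnm1 i).

Definition zd {R : realType} (i j : 'I_3) (p : poly3 R) : poly3 R :=
  zeta i * mpoly.mderiv j p.

(* Fock inner product <p,q> = \int p \bar q dW dW dW on polynomials.
   By Gaussian integration, <z^a, z^b> = delta_{ab} a_1! a_2! a_3!, so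
   <p,q> = sum_a p_a conj(q_a) a!. *)
Definition fock_ip {R : realType} (p q : poly3 R) : R[i] :=
  \sum_(m <- mpoly.msupp p)
     mpoly.mcoeff m p * conjc (mpoly.mcoeff m q)
       * ((\prod_(k < 3) (mpoly.fun_of_multinom m k)`!)%N)%:R.

Section Coefs.
Variables (R : realType) (theta c : R).
Local Notation w0 := ((cos theta)%:C%C : R[i]).
Local Notation g := ((sin theta)%:C%C : R[i]).
Local Notation cc := (c%:C%C : R[i]).
Local Notation I := ('i%C : R[i]).

Definition Bcoef (i j : 'I_3) : R[i] :=
  match nat_of_ord i, nat_of_ord j with
  | 0, 0 => cc * w0
  | 1, 1 => - (cc * w0)
  | 2, 2 => - (2%:R * w0 ^+ 2 * cc)
  | 0, 1 | 1, 0 => I * cc * g * w0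
  | _, _ => 0
  end.

Definition Vcoef (i j k l : 'I_3) : R[i] :=
  match nat_of_ord i, nat_of_ord j, nat_of_ord k, nat_of_ord l with
  | 0, 0, 0, 0 | 1, 1, 1, 1 => 1 / 4%:R
  | 0, 0, 1, 1 => - (1 / 2%:R)
  | 0, 1, 0, 1 | 1, 0, 1, 0 => - (g ^+ 2 / 4%:R)
  | 0, 1, 1, 0 => - (g ^+ 2 / 2%:R)
  | 2, 2, 2, 2 => w0 ^+ 2
  | 0, 0, 0, 1 | 0, 0, 1, 0 | 0, 1, 0, 0 | 1, 0, 0, 0 => I * g / 4%:R
  | 1, 1, 0, 1 | 1, 1, 1, 0 | 0, 1, 1, 1 | 1, 0, 1, 1 => - (I * g / 4%:R)
  | 0, 0, 2, 2 => - w0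
  | 1, 1, 2, 2 => w0
  | 0, 1, 2, 2 | 1, 0, 2, 2 => - (I * g * w0)
  | _, _, _, _ => 0
  end.
End Coefs.

Definition H1 {R : realType} (theta c kappa : R) (p : poly3 R) : poly3 R :=
  ((cos theta) ^- 2)%:C%C *:
    (\sum_(i < 3) \sum_(j < 3) Bcoef theta c i j *: zd i j p
     + \sum_(i < 3) \sum_(j < 3) \sum_(k < 3) \sum_(l < 3)
         Vcoef theta i j k l *: zd i j (zd k l p))
  + (kappa%:C)%C *: p.

(* T^* = T (for an operator on polynomials, with adjoint taken w.r.t. the Fock
   inner product) means <T p, q> = <p, T q> for all polynomials p, q. *)
Definition fock_selfadjoint {R : realType} (T : poly3 R -> poly3 R) : Prop :=
  forall p q : poly3 R, fock_ip (T p) q = fock_ip p (T q).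

From mathcomp Require Import all_boot all_algebra.
From mathcomp Require Import complex.
From mathcomp Require Import reals trigo.
From mathcomp Require Import mpoly.
From mathcomp Require Import ring lra.
Import GRing.Theory.

(* On monomials the Fock inner product is diagonal, <z^m, z^n> = delta_mn m!,
   so a self-adjoint operator T satisfies (T z^m)_n n! = conj((T z^n)_m) m!.
   For H_1 and the pairs (z_1^2, z_1 z_2), (z_2^2, z_1 z_2) both entries are
   purely imaginary: the coefficient of z_1 z_2 is
   i cos(theta)^-2 sin(theta) (2 c cos(theta) +- 1), the reverse one is half of
   it.  The symmetry condition then forces sin(theta) (2 c cos(theta) +- 1) = 0
   for both signs, hence sin(theta) = 0. *)

Local Open Scope ring_scope.

Lemma mcoeff_sum (n : nat) (K : nzRingType) (I : Type) (r : seq I) (P : pred I)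
    (F : I -> {mpoly K[n]}) (m : 'X_{1..n}) :
  (\sum_(i <- r | P i) F i)@_m = \sum_(i <- r | P i) (F i)@_m.
Proof. exact: raddf_sum. Qed.

Definition mfact {n} (m : 'X_{1..n}) : nat := \prod_(k < n) (m k)`!.

Section FockMonomials.
Context {R : realType}.

Lemma conjc_imag (a : R) : (a%:C * 'i)^*%C = - (a%:C * 'i)%C.
Proof.
by apply/eqP; rewrite eq_complex /= !(mul0r, mulr0, mulr1, subr0, addr0, oppr0) !eqxx.
Qed.

Lemma fock_ip_mpolyXl (m : 'X_{1..3}) (q : poly3 R) :
  fock_ip 'X_[m] q = (q@_m)^*%C * (mfact m)%:R.
Proof. by rewrite /fock_ip msuppX big_seq1 mcoeffX eqxx mul1r. Qed.

Lemma fock_ip_mpolyXr (p : poly3 R) (m : 'X_{1..3}) :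
  fock_ip p 'X_[m] = p@_m * (mfact m)%:R.
Proof.
have off_m m' : m' != m ->
    p@_m' * (('X_[m] : poly3 R)@_m')^*%C * (mfact m')%:R = 0.
  by move=> /negPf ne; rewrite mcoeffX eq_sym ne conjc0 mulr0 mul0r.
rewrite /fock_ip; have [pm | pm] := boolP (m \in msupp p).
  rewrite (bigD1_seq m) ?msupp_uniq //= [X in _ + X]big1 => [|m' /off_m //].
  by rewrite mcoeffX eqxx conjc1 mulr1 addr0.
rewrite memN_msupp_eq0 // mul0r big1_seq // => m' /andP[_ m'p]; apply: off_m.
by apply: contraNneq pm => <-.
Qed.

Lemma fock_selfadjoint_mcoeff (T : poly3 R -> poly3 R) :
  fock_selfadjoint T -> forall m n : 'X_{1..3},
  (T 'X_[m])@_n * (mfact n)%:R = ((T 'X_[n])@_m)^*%C * (mfact m)%:R.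
Proof.
move=> T_sa m n; move: (T_sa 'X_[m] 'X_[n]).
by rewrite fock_ip_mpolyXl fock_ip_mpolyXr.
Qed.

Lemma fock_selfadjoint_imag_mcoeff {T : poly3 R -> poly3 R} {m n : 'X_{1..3}}
    {a b : R} :
  fock_selfadjoint T ->
  (T 'X_[m])@_n = a%:C%C * 'i%C -> (T 'X_[n])@_m = b%:C%C * 'i%C ->
  a * (mfact n)%:R + b * (mfact m)%:R = 0.
Proof.
move=> /fock_selfadjoint_mcoeff /(_ m n) + Tmn Tnm.
rewrite Tmn Tnm conjc_imag => sym_mn.
apply: (@complexI R); apply: (mulIf (x := 'i%C)).
  by apply/eqP; case=> /eqP; rewrite oner_eq0.
rewrite mul0r rmorphD !rmorphM !rmorph_nat /=.
have -> : ((a%:C * (mfact n)%:R + b%:C * (mfact m)%:R) * 'i =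
    a%:C * 'i * (mfact n)%:R + b%:C * 'i * (mfact m)%:R)%C by ring.
by rewrite sym_mn mulNr addNr.
Qed.

Lemma zd_mpolyX (i j : 'I_3) (m : 'X_{1..3}) :
  zd i j ('X_[m] : poly3 R) = (m j)%:R *: 'X_[U_(i) + (m - U_(j))].
Proof. by rewrite /zd /zeta mderivX -scalerAr -mpolyXD. Qed.

Lemma zdZ (i j : 'I_3) (a : R[i]) (p : poly3 R) : zd i j (a *: p) = a *: zd i j p.
Proof. by rewrite /zd mderivZ scalerAr. Qed.

End FockMonomials.

Local Notation o0 := (@Ordinal 3 0 isT).
Local Notation o1 := (@Ordinal 3 1 isT).
Local Notation o2 := (@Ordinal 3 2 isT).

Lemma ord3P (P : 'I_3 -> Prop) : P o0 -> P o1 -> P o2 -> forall k, P k.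
Proof. by move=> P0 P1 P2 [[|[|[|//]]] lt_k3]; rewrite (bool_irrelevance lt_k3 isT). Qed.

Lemma big_ord3 (T : Type) (idx : T) (op : Monoid.law idx) (F : 'I_3 -> T) :
  \big[op/idx]_(k < 3) F k = op (op (F o0) (F o1)) (F o2).
Proof.
rewrite !big_ord_recl big_ord0 Monoid.mulm1 Monoid.mulmA.
by congr (op (op (F _) (F _)) (F _)); apply/val_inj.
Qed.

(* Exponent vectors are kept as functions on 'I_3 so that concrete instances
   reduce by computation; [mnm3] turns them into monomials. *)
Definition mnm3 (f : 'I_3 -> nat) : 'X_{1..3} := [multinom f k | k < 3].

Definition exps (a1 a2 a3 : nat) (k : 'I_3) : nat := nth 0 [:: a1; a2; a3] k.

Definition exp_eqb (f g : 'I_3 -> nat) : bool :=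
  [&& f o0 == g o0, f o1 == g o1 & f o2 == g o2].

Definition exp_shift (i j : 'I_3) (f : 'I_3 -> nat) (k : 'I_3) : nat :=
  (i == k) + (f k - (j == k)).

Lemma eq_mnm3 (f g : 'I_3 -> nat) : (mnm3 f == mnm3 g) = exp_eqb f g.
Proof.
apply/eqP/and3P => [/mnmP fg | [/eqP fg0 /eqP fg1 /eqP fg2]].
  by split; apply/eqP; move: (fg o0) (fg o1) (fg o2); rewrite !mnmE.
by apply/mnmP; apply: ord3P; rewrite !mnmE.
Qed.

Lemma mnm3_shift (i j : 'I_3) (f : 'I_3 -> nat) :
  (U_(i) + (mnm3 f - U_(j)))%MM = mnm3 (exp_shift i j f).
Proof. by apply/mnmP => k; rewrite mnmDE mnmBE !mnmE. Qed.

Lemma mfact_mnm3 (f : 'I_3 -> nat) :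
  mfact (mnm3 f) = ((f o0)`! * (f o1)`! * (f o2)`!)%N.
Proof. by rewrite /mfact big_ord3 !mnmE. Qed.

Lemma zd_mnm3 {R : realType} (i j : 'I_3) (f : 'I_3 -> nat) :
  zd i j ('X_[mnm3 f] : poly3 R) = (f j)%:R *: 'X_[mnm3 (exp_shift i j f)].
Proof. by rewrite zd_mpolyX mnm3_shift mnmE. Qed.

Lemma mcoeff_mnm3 {R : realType} (f g : 'I_3 -> nat) :
  ('X_[mnm3 f] : poly3 R)@_(mnm3 g) = (exp_eqb f g)%:R.
Proof. by rewrite mcoeffX eq_mnm3. Qed.

Ltac eval_nat_casts :=
  repeat match goal with
  | |- context [ (?k)%:R ] =>
      let v := eval vm_compute in k in
      tryif constr_eq k v then fail else change k with v
  end.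

Section Hamiltonian.
Context {R : realType} (theta c kappa : R).

Lemma mcoeff_H1_mnm3 (f g : 'I_3 -> nat) :
  (H1 theta c kappa 'X_[mnm3 f])@_(mnm3 g) =
  ((cos theta) ^- 2)%:C%C *
   (\sum_(i < 3) \sum_(j < 3)
       Bcoef theta c i j * (f j * exp_eqb (exp_shift i j f) g)%:R
    + \sum_(i < 3) \sum_(j < 3) \sum_(k < 3) \sum_(l < 3)
       Vcoef theta i j k l *
         (f l * exp_shift k l f j * exp_eqb (exp_shift i j (exp_shift k l f)) g)%:R)
  + (kappa%:C)%C * (exp_eqb f g)%:R.
Proof.
rewrite /H1 !(mcoeffD, mcoeffZ, mcoeff_sum) mcoeff_mnm3.
congr (_ * (_ + _) + _); apply: eq_bigr => i _; rewrite mcoeff_sum.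
  apply: eq_bigr => j _.
  by rewrite mcoeffZ zd_mnm3 mcoeffZ mcoeff_mnm3 natrM mulrA.
apply: eq_bigr => j _; rewrite mcoeff_sum; apply: eq_bigr => k _.
rewrite mcoeff_sum; apply: eq_bigr => l _.
by rewrite mcoeffZ zd_mnm3 zdZ zd_mnm3 !mcoeffZ mcoeff_mnm3 !natrM !mulrA.
Qed.

(* [cos theta ^- 2] is generalized so that [field] treats it as an atom instead
   of asking for [cos theta != 0]. *)
Ltac eval_H1_coef :=
  rewrite mcoeff_H1_mnm3 !big_ord3; eval_nat_casts; rewrite /Bcoef /Vcoef /=;
  move: (cos theta ^- 2) => ?; by field.

Lemma H1_coef_200_110 :
  (H1 theta c kappa 'X_[mnm3 (exps 2 0 0)])@_(mnm3 (exps 1 1 0)) =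
  ((cos theta) ^- 2 * sin theta * (2 * c * cos theta + 1))%:C%C * 'i%C.
Proof. eval_H1_coef. Qed.

Lemma H1_coef_110_200 :
  (H1 theta c kappa 'X_[mnm3 (exps 1 1 0)])@_(mnm3 (exps 2 0 0)) =
  ((cos theta) ^- 2 * sin theta * (2 * c * cos theta + 1) / 2)%:C%C * 'i%C.
Proof. eval_H1_coef. Qed.

Lemma H1_coef_020_110 :
  (H1 theta c kappa 'X_[mnm3 (exps 0 2 0)])@_(mnm3 (exps 1 1 0)) =
  ((cos theta) ^- 2 * sin theta * (2 * c * cos theta - 1))%:C%C * 'i%C.
Proof. eval_H1_coef. Qed.

Lemma H1_coef_110_020 :
  (H1 theta c kappa 'X_[mnm3 (exps 1 1 0)])@_(mnm3 (exps 0 2 0)) =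
  ((cos theta) ^- 2 * sin theta * (2 * c * cos theta - 1) / 2)%:C%C * 'i%C.
Proof. eval_H1_coef. Qed.

End Hamiltonian.

Theorem proposition1 (R : realType) (theta c kappa : R) :
  cos theta != 0 -> sin theta != 0 ->
  ~ fock_selfadjoint (H1 theta c kappa).
Proof.
move=> cos_neq0 sin_neq0 H1_sa.
move: (fock_selfadjoint_imag_mcoeff H1_sa
         (H1_coef_200_110 _ _ _) (H1_coef_110_200 _ _ _)).
move: (fock_selfadjoint_imag_mcoeff H1_sa
         (H1_coef_020_110 _ _ _) (H1_coef_110_020 _ _ _)).
rewrite !mfact_mnm3; eval_nat_casts => minus_eq0 plus_eq0.
have : (cos theta) ^- 2 * sin theta = 0 by lra.
by move/eqP; rewrite !mulf_eq0 invr_eq0 expf_eq0 (negPf cos_neq0) (negPf sin_neq0).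
Qed.
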